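(* Let $x,y:\mathbb{Z}\to\mathbb{R}$ be the coordinates of the vertices of a polygon indexed by $u\in\mathbb{Z}$, let $X+ih_1$, $Y+ih_2$ be their discrete analytic extensions, $h=(h_1,h_2)$, and let $F:\mathbb{Z}^2\to\mathbb{R}$ satisfy $F(u+1,v)-F(u,v)=-[h(u+\tfrac12,v-\tfrac12),h(u+\tfrac12,v+\tfrac12)]$ and $F(u,v+1)-F(u,v)=[h(u-\tfrac12,v+\tfrac12),h(u+\tfrac12,v+\tfrac12)]$. Let $Q=(X,Y,F):\mathbb{Z}^2\to\mathbb{R}^3$. Then $Q$ is a discrete definite improper affine sphere: for every $(u,v)\in\mathbb{Z}^2$ the four points $Q(u,v),Q(u+1,v),Q(u,v+1),Q(u+1,v+1)$ are coplanar, and the discrete Laplacian $Q(u+1,v)+Q(u,v+1)+Q(u-1,v)+Q(u,v-1)-4Q(u,v)$ is parallel to the $z$-axis.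
   Context: $[X,Y]$ is the $2\times2$ determinant with columns $X,Y$. With $(\mathbb{Z}^2)^*=(\mathbb{Z}+\tfrac12)^2$, functions $g:\mathbb{Z}^2\to\mathbb{R}$, $k:(\mathbb{Z}^2)^*\to\mathbb{R}$ form a discrete analytic function $g+ik$ if $g(u+1,v)-g(u,v)=k(u+\tfrac12,v+\tfrac12)-k(u+\tfrac12,v-\tfrac12)$ and $g(u,v+1)-g(u,v)=-(k(u+\tfrac12,v+\tfrac12)-k(u-\tfrac12,v+\tfrac12))$ for all $(u,v)$. The discrete analytic extension of $x$ is the unique $X+ih_1$ with $X(u,0)=x(u)$ and $h_1(u+\tfrac12,\tfrac12)=-h_1(u+\tfrac12,-\tfrac12)$; likewise $Y+ih_2$ for $y$. A map $Q:\mathbb{Z}^2\to\mathbb{R}^3$ is a discrete definite improper affine sphere if all elementary quadrilaterals $Q(u,v),Q(u+1,v),Q(u,v+1),Q(u+1,v+1)$ are planar and there is a fixed direction $\xi$ to which every discrete Laplacian of $Q$ is parallel. *)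

From HB Require Import structures.
From mathcomp Require Import all_boot all_order all_algebra.
From mathcomp Require Import reals.
Set Implicit Arguments. Unset Strict Implicit. Unset Printing Implicit Defensive.
Import Order.TTheory GRing.Theory Num.Theory.
Local Open Scope ring_scope.

(* Convention: the dual lattice (Z^2)^* = (Z+1/2)^2 is indexed by Z^2:
   a function k : int -> int -> R on the dual lattice is read as
   k a b = k(a + 1/2, b + 1/2). *)

Definition det2 (R : ringType) (X Y : R * R) : R := X.1 * Y.2 - X.2 * Y.1.

(* g + i k is discrete analytic:
   g(u+1,v)-g(u,v) = k(u+1/2,v+1/2) - k(u+1/2,v-1/2)
   g(u,v+1)-g(u,v) = -(k(u+1/2,v+1/2) - k(u-1/2,v+1/2)). *)
Definition discrete_analytic (R : ringType) (g k : int -> int -> R) : Prop :=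
  forall u v : int,
    g (u + 1) v - g u v = k u v - k u (v - 1) /\
    g u (v + 1) - g u v = - (k u v - k (u - 1) v).

Definition discrete_analytic_extension (R : ringType)
    (x : int -> R) (X h : int -> int -> R) : Prop :=
  [/\ discrete_analytic X h,
      forall u : int, X u 0 = x u
    & forall u : int, h u 0 = - h u (-1)].

Definition pt3 (R : ringType) (a b c : R) : 'rV[R]_3 :=
  \row_(i < 3) [:: a; b; c]`_i.

Definition coplanar4 (R : comRingType) (P0 P1 P2 P3 : 'rV[R]_3) : Prop :=
  \det (col_mx (P1 - P0) (col_mx (P2 - P0) (P3 - P0)) : 'M[R]_(1 + (1 + 1), 3)) = 0.

Definition discrete_laplacian (R : ringType) (Q : int -> int -> 'rV[R]_3)
  (u v : int) : 'rV[R]_3 :=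
  Q (u + 1) v + Q u (v + 1) + Q (u - 1) v + Q u (v - 1) - 4%:R *: Q u v.

Definition ez (R : ringType) : 'rV[R]_3 := pt3 0 0 1.

Definition parallel (R : ringType) (w xi : 'rV[R]_3) : Prop :=
  exists c : R, w = c *: xi.

From HB Require Import structures.
From mathcomp Require Import all_boot all_order all_algebra.
From mathcomp Require Import reals.
From mathcomp Require Import ring.
Import Order.TTheory GRing.Theory Num.Theory.
Set Implicit Arguments. Unset Strict Implicit. Unset Printing Implicit Defensive.
Local Open Scope ring_scope.

(* The vector n = (h2, -h1, -1) at the dual vertex (u+1/2, v+1/2) is orthogonal
   to every edge of the face around it: the X- and Y-increments along an edge
   are, up to sign, the increments of h1 and h2 across the dual edge, and the
   defining equation of F supplies exactly the determinant cancelling them.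
   Since n <> 0 the face is planar.  X and Y, as real parts of discrete
   analytic functions, are discrete harmonic, so the Laplacian of Q = (X, Y, F)
   is vertical. *)

Definition laplacian (R : nzRingType) (g : int -> int -> R) (u v : int) : R :=
  g (u + 1) v + g u (v + 1) + g (u - 1) v + g u (v - 1) - 4%:R * g u v.

Lemma discrete_analytic_harmonic (R : comNzRingType) (g k : int -> int -> R) :
  discrete_analytic g k -> forall u v, laplacian g u v = 0.
Proof.
move=> gk u v; have [du dv] := gk u v.
have [du' _] := gk (u - 1) v; have [_ dv'] := gk u (v - 1).
rewrite subrK in du'; rewrite subrK in dv'.
have -> : laplacian g u v = (g (u + 1) v - g u v) - (g u v - g (u - 1) v)
                          + (g u (v + 1) - g u v) - (g u v - g u (v - 1)).
  by rewrite /laplacian; ring.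
by rewrite du du' dv dv'; ring.
Qed.

Lemma pt3B (R : nzRingType) (a b c a' b' c' : R) :
  pt3 a b c - pt3 a' b' c' = pt3 (a - a') (b - b') (c - c').
Proof. by apply/rowP => i; rewrite !mxE; case: i => [[|[|[|]]] ?]. Qed.

Lemma pt3_mul_tr_eq0 (R : comNzRingType) (a b c p q r : R) :
  a * p + b * q + c * r = 0 -> pt3 a b c *m (pt3 p q r)^T = 0.
Proof.
move=> dot0; apply/rowP => i.
by rewrite ord1 !mxE !big_ord_recr big_ord0 /= !mxE /= add0r.
Qed.

Lemma pt3_eq0 (R : nzRingType) (a b c : R) : pt3 a b c = 0 -> c = 0.
Proof. by move/rowP/(_ (@Ordinal 3 2 isT)); rewrite !mxE. Qed.

Lemma pt3_scale_ez (R : nzRingType) (c : R) : pt3 0 0 c = c *: ez R.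
Proof.
by apply/rowP => i; rewrite !mxE; case: i => [[|[|[|]]] ?] //=; rewrite ?mulr0 ?mulr1.
Qed.

Lemma discrete_laplacian_pt3 (R : nzRingType) (a b c : int -> int -> R) u v :
  discrete_laplacian (fun u v => pt3 (a u v) (b u v) (c u v)) u v
  = pt3 (laplacian a u v) (laplacian b u v) (laplacian c u v).
Proof. by apply/rowP => i; rewrite !mxE; case: i => [[|[|[|]]] ?]. Qed.

Lemma coplanar4_normal (R : fieldType) (P0 P1 P2 P3 n : 'rV[R]_3) : n != 0 ->
  (P1 - P0) *m n^T = 0 -> (P2 - P0) *m n^T = 0 -> (P3 - P0) *m n^T = 0 ->
  coplanar4 P0 P1 P2 P3.
Proof.
move=> n0 n1 n2 n3; rewrite /coplanar4 -det_tr; apply/eqP/det0P; exists n => //.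
by apply: trmx_inj; rewrite trmx_mul trmxK trmx0 !mul_col_mx n1 n2 n3 !col_mx0.
Qed.

Section FaceNormal.
Variables (R : comNzRingType) (X Y h1 h2 F : int -> int -> R).
Hypotheses (XA : discrete_analytic X h1) (YA : discrete_analytic Y h2).
Hypothesis dF : forall u v : int,
  F (u + 1) v - F u v = - det2 (h1 u (v - 1), h2 u (v - 1)) (h1 u v, h2 u v) /\
  F u (v + 1) - F u v = det2 (h1 (u - 1) v, h2 (u - 1) v) (h1 u v, h2 u v).

Local Notation Q u v := (pt3 (X u v) (Y u v) (F u v)).

Definition face_normal (u v : int) : 'rV[R]_3 := pt3 (h2 u v) (- h1 u v) (-1).

Lemma face_normal_neq0 u v : face_normal u v != 0.
Proof. by apply/negP => /eqP/pt3_eq0/eqP; rewrite oppr_eq0 oner_eq0. Qed.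

Lemma lower_edge_orth u v : (Q (u + 1) v - Q u v) *m (face_normal u v)^T = 0.
Proof.
rewrite pt3B (XA u v).1 (YA u v).1 (dF u v).1.
by apply: pt3_mul_tr_eq0; rewrite /det2 /=; ring.
Qed.

Lemma upper_edge_orth u v :
  (Q (u + 1) (v + 1) - Q u (v + 1)) *m (face_normal u v)^T = 0.
Proof.
rewrite pt3B (XA u (v + 1)).1 (YA u (v + 1)).1 (dF u (v + 1)).1 addrK.
by apply: pt3_mul_tr_eq0; rewrite /det2 /=; ring.
Qed.

Lemma left_edge_orth u v : (Q u (v + 1) - Q u v) *m (face_normal u v)^T = 0.
Proof.
rewrite pt3B (XA u v).2 (YA u v).2 (dF u v).2.
by apply: pt3_mul_tr_eq0; rewrite /det2 /=; ring.
Qed.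

Lemma diagonal_orth u v :
  (Q (u + 1) (v + 1) - Q u v) *m (face_normal u v)^T = 0.
Proof.
rewrite -[Q (u + 1) (v + 1)](subrK (Q u (v + 1))) -addrA mulmxDl.
by rewrite upper_edge_orth left_edge_orth addr0.
Qed.

End FaceNormal.

Theorem mainTheorem11 (R : realType) (x y : int -> R)
    (X Y h1 h2 F : int -> int -> R) :
  discrete_analytic_extension x X h1 ->
  discrete_analytic_extension y Y h2 ->
  (forall u v : int,
     F (u + 1) v - F u v = - det2 (h1 u (v - 1), h2 u (v - 1)) (h1 u v, h2 u v) /\
     F u (v + 1) - F u v = det2 (h1 (u - 1) v, h2 (u - 1) v) (h1 u v, h2 u v)) ->
  let Q := fun u v : int => pt3 (X u v) (Y u v) (F u v) in
  (forall u v : int,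
     coplanar4 (Q u v) (Q (u + 1) v) (Q u (v + 1)) (Q (u + 1) (v + 1))) /\
  (forall u v : int, parallel (discrete_laplacian Q u v) (ez R)).
Proof.
move=> [XA _ _] [YA _ _] dF Q; split=> u v.
  apply: (coplanar4_normal (face_normal_neq0 h1 h2 u v)).
  - exact: lower_edge_orth.
  - exact: left_edge_orth.
  - exact: diagonal_orth.
exists (laplacian F u v).
by rewrite discrete_laplacian_pt3 (discrete_analytic_harmonic XA)
  (discrete_analytic_harmonic YA) pt3_scale_ez.
Qed.
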